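(* Let $E$ be an effect algebra and $(B,v)$ a unital Abelian po-group. Then there is an isomorphism of generalized effect algebras $$[E,\Gamma(B,v)]\cong[\mathrm{Gr}(E),(B,v)]_{\mathrm{GEA}},$$ natural in both $E$ and $(B,v)$, given (from right to left) by $g\mapsto g\circ\eta_E$.
   Context: An effect algebra is a partial algebra $(E;\oplus,',0,1)$ with $\oplus$ commutative and associative (Kleene identities), $a\oplus b=1$ iff $b=a'$, and $a\oplus1$ defined iff $a=0$. For an Abelian po-group $B$ and $v\in B^+$, $\Gamma(B,v)$ is the interval $\{b:0\le b\le v\}$ as an effect algebra ($a\oplus b=a+b$ defined iff $a+b\le v$, $a'=v-a$). The universal group of $E$ is a unital Abelian po-group $(\mathrm{Gr}(E),u)$ together with an effect algebra homomorphism $\eta_E\colon E\to\Gamma(\mathrm{Gr}(E),u)$ such that every effect algebra homomorphism $E\to\Gamma(B,w)$ factors as $\Gamma(g)\circ\eta_E$ for a unique order-preserving group homomorphism $g\colon\mathrm{Gr}(E)\to B$ with $g(u)=w$ (this holds for any $w\in B^+$). $[E,F]$ denotes the generalized effect algebra of maps $E\to F$ preserving $0$ and existing orthosums, with pointwise partial sum. For unital po-groups $(A,u)$, $(B,v)$, $[A,B]_{\mathrm{GEA}}$ is the set of order-preserving group homomorphisms $g\colon A\to B$ with $g(u)\le v$, made into a generalized effect algebra by $g\perp h$ iff $g(u)+h(u)\le v$, with pointwise sum and the zero map as $0$. *)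

From mathcomp Require Import all_boot all_algebra.
Set Implicit Arguments. Unset Strict Implicit. Unset Printing Implicit Defensive.
Import GRing.Theory.
Local Open Scope ring_scope.

Definition obind_sum {T : Type} (s : T -> T -> option T) (x : option T) (c : T)
  : option T := match x with Some y => s y c | None => None end.
Definition sum_obind {T : Type} (s : T -> T -> option T) (a : T) (x : option T)
  : option T := match x with Some y => s a y | None => None end.

Record effect_algebra := EffectAlgebra {
  ea_car :> Type;
  ea_sum : ea_car -> ea_car -> option ea_car;
  ea_comp : ea_car -> ea_car;
  ea_zero : ea_car;
  ea_one : ea_car;
  ea_sumC : forall a b, ea_sum a b = ea_sum b a;
  ea_sumA : forall a b c,
      obind_sum ea_sum (ea_sum a b) c = sum_obind ea_sum a (ea_sum b c);
  ea_sum_one : forall a b, ea_sum a b = Some ea_one <-> b = ea_comp a;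
  ea_sum_one_def : forall a, (exists c, ea_sum a ea_one = Some c) <-> a = ea_zero
}.

Definition ea_hom (E F : effect_algebra) (f : E -> F) : Prop :=
  f (ea_one E) = ea_one F /\
  forall a b c, ea_sum a b = Some c -> ea_sum (f a) (f b) = Some (f c).

Record pogroup := POGroup {
  pg_sort :> zmodType;
  pg_le : pg_sort -> pg_sort -> Prop;
  pg_le_refl : forall x, pg_le x x;
  pg_le_anti : forall x y, pg_le x y -> pg_le y x -> x = y;
  pg_le_trans : forall x y z, pg_le x y -> pg_le y z -> pg_le x z;
  pg_le_add : forall x y z, pg_le x y -> pg_le (x + z) (y + z)
}.

Definition unital (B : pogroup) (v : B) : Prop :=
  pg_le 0 v /\ forall x : B, exists n : nat, pg_le (- (v *+ n)) x /\ pg_le x (v *+ n).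

Definition po_hom (A B : pogroup) (g : A -> B) : Prop :=
  (forall x y, g (x + y) = g x + g y) /\ (forall x y, pg_le x y -> pg_le (g x) (g y)).

(* Gamma(B,v) = {b | 0 <= b <= v}, with a (+) b = a + b defined iff a + b <= v.
   A map E -> Gamma(B,v) is represented by a map E -> B with values in [0,v]. *)
Definition in_gamma (B : pogroup) (v : B) (b : B) : Prop := pg_le 0 b /\ pg_le b v.

Definition gamma_additive (E : effect_algebra) (B : pogroup) (v : B) (f : E -> B) :=
  forall a b c, ea_sum a b = Some c -> pg_le (f a + f b) v /\ f c = f a + f b.

Definition ea_hom_gamma (E : effect_algebra) (B : pogroup) (v : B) (f : E -> B) :=
  (forall a, in_gamma v (f a)) /\ f (ea_one E) = v /\ gamma_additive v f.

(* element of the GEA [E, Gamma(B,v)]: preserves 0 and existing orthosums *)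
Definition ea_map_gamma (E : effect_algebra) (B : pogroup) (v : B) (f : E -> B) :=
  (forall a, in_gamma v (f a)) /\ f (ea_zero E) = 0 /\ gamma_additive v f.

Definition ea_map_orth (E : effect_algebra) (B : pogroup) (v : B) (f h : E -> B) :=
  forall a, pg_le (f a + h a) v.

Definition universal_group (E : effect_algebra) (G : pogroup) (u : G) (eta : E -> G)
  : Prop :=
  unital u /\ ea_hom_gamma u eta /\
  forall (B : pogroup) (w : B), pg_le 0 w ->
  forall f : E -> B, ea_hom_gamma w f ->
  exists g : G -> B,
    (po_hom g /\ g u = w /\ forall a, g (eta a) = f a) /\
    (forall g' : G -> B, po_hom g' -> g' u = w -> (forall a, g' (eta a) = f a) ->
       forall x, g' x = g x).

Definition gea_hom (A : pogroup) (u : A) (B : pogroup) (v : B) (g : A -> B) : Prop :=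
  po_hom g /\ pg_le (g u) v.

Definition gea_orth (A : pogroup) (u : A) (B : pogroup) (v : B) (g h : A -> B) : Prop :=
  pg_le (g u + h u) v.

Definition map_add (X : Type) (B : zmodType) (g h : X -> B) : X -> B :=
  fun x => g x + h x.
Definition map_zero (X : Type) (B : zmodType) : X -> B := fun _ => 0.

Definition Phi (E : effect_algebra) (G B : pogroup) (eta : E -> G) (g : G -> B)
  : E -> B := fun a => g (eta a).

(* A group morphism g with g(u) <= v composed with eta_E is an effect algebra
   morphism into Gamma(B, g u), and Gamma(B, g u) lies inside Gamma(B, v).
   Conversely, a map f in [E, Gamma(B, v)] is an effect algebra morphism into
   Gamma(B, f 1), so the universal property of Gr(E) applied with w := f 1
   yields g with g \o eta_E = f; it is unique because any such g satisfies
   g u = g (eta_E 1) = f 1.  Orthogonality g(u) + h(u) <= v is tested at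
   u = eta_E 1, and every eta_E a lies below u. *)
From mathcomp Require Import all_boot all_algebra.
Import GRing.Theory.
Local Open Scope ring_scope.

Section POGroupTheory.
Variable B : pogroup.
Implicit Types x y z : B.

Lemma pg_leD x x' y y' : pg_le x x' -> pg_le y y' -> pg_le (x + y) (x' + y').
Proof.
move=> le_xx' le_yy'; apply: (pg_le_trans (pg_le_add y le_xx')).
by rewrite [x' + y]addrC [x' + y']addrC; apply: pg_le_add.
Qed.

Lemma pg_le_add2r x y z : pg_le (x + z) (y + z) -> pg_le x y.
Proof. by move=> /(pg_le_add (- z)); rewrite -!addrA subrr !addr0. Qed.

Lemma pg_le_addr x y : pg_le 0 y -> pg_le x (x + y).
Proof. by move=> /(pg_le_add x); rewrite add0r addrC. Qed.

End POGroupTheory.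

Section POHomTheory.
Variables A B : pogroup.
Implicit Types g h : A -> B.

Lemma po_hom0 g : po_hom g -> g 0 = 0.
Proof. by case=> gD _; apply: (addrI (g 0)); rewrite -gD !addr0. Qed.

Lemma po_hom_ge0 {g x} : po_hom g -> pg_le 0 x -> pg_le 0 (g x).
Proof. by move=> hom_g /hom_g.2; rewrite po_hom0. Qed.

Lemma po_hom_add g h : po_hom g -> po_hom h -> po_hom (map_add g h).
Proof.
move=> [gD g_le] [hD h_le]; split=> [x y|x y le_xy]; first by rewrite /map_add gD hD addrACA.
by apply: pg_leD; [apply: g_le | apply: h_le].
Qed.

Lemma po_hom_zero : po_hom (@map_zero A B).
Proof. by split=> [x y|x y _]; [rewrite /map_zero addr0 | apply: pg_le_refl]. Qed.

Lemma po_hom_comp (C : pogroup) (k : B -> C) g :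
  po_hom g -> po_hom k -> po_hom (k \o g).
Proof.
move=> [gD g_le] [kD k_le]; split=> [x y|x y le_xy] /=; first by rewrite gD kD.
by apply/k_le/g_le.
Qed.

End POHomTheory.

Section GeaHomTheory.
Variables (A : pogroup) (u : A) (B : pogroup) (v : B).
Implicit Types g h : A -> B.

Lemma gea_hom_add g h :
  gea_hom u v g -> gea_hom u v h -> gea_orth u v g h -> gea_hom u v (map_add g h).
Proof. by move=> [hom_g _] [hom_h _] orth_gh; split; first exact: po_hom_add. Qed.

Lemma gea_hom_zero : pg_le 0 v -> gea_hom u v (@map_zero A B).
Proof. by split; first exact: po_hom_zero. Qed.

Lemma gea_hom_precomp (A' : pogroup) (u' : A') (f : A' -> A) g :
  po_hom f -> f u' = u -> gea_hom u v g -> gea_hom u' v (g \o f).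
Proof. by move=> hom_f fu [hom_g gu]; split; [apply: po_hom_comp | rewrite /= fu]. Qed.

Lemma gea_hom_postcomp (B' : pogroup) (v' : B') (k : B -> B') g :
  po_hom k -> k v = v' -> gea_hom u v g -> gea_hom u v' (k \o g).
Proof.
by move=> hom_k kv [hom_g gu]; split; [apply: po_hom_comp | rewrite -kv; apply: hom_k.2].
Qed.

End GeaHomTheory.

Section GammaMaps.
Context {E : effect_algebra} {B : pogroup}.
Implicit Types (v w : B) (f : E -> B).

Lemma gamma_le_one {v f} : (forall a, in_gamma v (f a)) -> gamma_additive v f ->
  forall a, pg_le (f a) (f (ea_one E)).
Proof.
move=> f_gamma f_add a.
have sum_a : ea_sum a (ea_comp a) = Some (ea_one E) by apply/ea_sum_one.
by rewrite (f_add _ _ _ sum_a).2; apply/pg_le_addr/(f_gamma _).1.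
Qed.

(* The sum 0 (+) 1 exists, and its value f 0 + f 1 stays below f 1 = v. *)
Lemma ea_hom_gamma0 {v f} : ea_hom_gamma v f -> f (ea_zero E) = 0.
Proof.
move=> [f_gamma [f1 f_add]].
have [c sum_c] := (ea_sum_one_def (ea_zero E)).2 erefl.
have [_ fc] := f_add _ _ _ sum_c.
apply: pg_le_anti; last exact: (f_gamma _).1.
by apply: (@pg_le_add2r _ _ _ v); rewrite add0r -f1 -fc f1; apply: (f_gamma c).2.
Qed.

Lemma ea_hom_gamma_widen {v w f} :
  ea_hom_gamma w f -> pg_le w v -> ea_map_gamma v f.
Proof.
move=> hom_f le_wv; have [f_gamma [_ f_add]] := hom_f.
split; last split.
- by move=> a; split; [apply: (f_gamma a).1 | apply: pg_le_trans le_wv; apply: (f_gamma a).2].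
- exact: ea_hom_gamma0 hom_f.
- move=> a b c sum_c; have [le_w ->] := f_add _ _ _ sum_c.
  by split=> //; apply: pg_le_trans le_wv.
Qed.

Lemma ea_map_gamma_hom {v f} : ea_map_gamma v f -> ea_hom_gamma (f (ea_one E)) f.
Proof.
move=> [f_gamma [_ f_add]]; have f_le1 := gamma_le_one f_gamma f_add.
split; last split=> //; first by move=> a; split; [apply: (f_gamma a).1 | apply: f_le1].
by move=> a b c sum_c; have [_ fc] := f_add _ _ _ sum_c; split=> //; rewrite -fc.
Qed.

End GammaMaps.

Section Comparison.
Context {E : effect_algebra} {G : pogroup} {u : G} {eta : E -> G}.
Context {B : pogroup} {v : B}.
Implicit Types g h : G -> B.

Section EtaHom.
Hypothesis hom_eta : ea_hom_gamma u eta.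

Lemma Phi_ea_hom_gamma {g} : po_hom g -> ea_hom_gamma (g u) (Phi eta g).
Proof.
have [eta_gamma [eta1 eta_add]] := hom_eta.
move=> hom_g; have [gD g_le] := hom_g.
split; last split.
- by move=> a; split; [apply/po_hom_ge0/(eta_gamma a).1 | apply/g_le/(eta_gamma a).2].
- by rewrite /Phi eta1.
- move=> a b c sum_c; have [le_u etac] := eta_add _ _ _ sum_c.
  by rewrite /Phi etac gD; split=> //; rewrite -gD; apply: g_le.
Qed.

Lemma Phi_ea_map_gamma {g} : gea_hom u v g -> ea_map_gamma v (Phi eta g).
Proof. by move=> [hom_g gu]; apply: ea_hom_gamma_widen (Phi_ea_hom_gamma hom_g) gu. Qed.

Lemma Phi_orth {g h} : po_hom g -> po_hom h ->
  gea_orth u v g h <-> ea_map_orth v (Phi eta g) (Phi eta h).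
Proof.
have [eta_gamma [eta1 _]] := hom_eta.
move=> [_ g_le] [_ h_le]; split=> [orth_gh a | orth_gh].
- apply: pg_le_trans orth_gh.
  by apply: pg_leD; [apply: g_le | apply: h_le]; apply: (eta_gamma a).2.
- by move: (orth_gh (ea_one E)); rewrite /Phi eta1.
Qed.

End EtaHom.

Section Universal.
Hypothesis univ_eta : universal_group u eta.

Lemma Phi_inj {g h} : po_hom g -> po_hom h ->
  Phi eta g =1 Phi eta h -> g =1 h.
Proof.
have [_ [hom_eta lift]] := univ_eta; have eta1 := hom_eta.2.1.
move=> hom_g hom_h Phi_gh; have hom_Phi_g := Phi_ea_hom_gamma hom_eta hom_g.
have gu_ge0 : pg_le 0 (g u) by rewrite -eta1; apply: (hom_Phi_g.1 _).1.
have hu : h u = g u by rewrite -eta1; symmetry; apply: Phi_gh.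
have [k [_ uniq_k]] := lift B (g u) gu_ge0 _ hom_Phi_g.
by move=> x; rewrite (uniq_k g hom_g erefl (fun=> erefl)) (uniq_k h hom_h hu).
Qed.

Lemma Phi_surj f : ea_map_gamma v f ->
  exists g, gea_hom u v g /\ Phi eta g =1 f.
Proof.
have [_ [_ lift]] := univ_eta.
move=> map_f; have f1_gamma := map_f.1 (ea_one E).
have [g [[hom_g [gu g_eta]] _]] := lift B _ f1_gamma.1 f (ea_map_gamma_hom map_f).
by exists g; split=> //; split=> //; rewrite gu; apply: f1_gamma.2.
Qed.

End Universal.

End Comparison.

Theorem lemma4p9 (E : effect_algebra) (G : pogroup) (u : G) (eta : E -> G)
    (Heta : universal_group u eta)
    (B : pogroup) (v : B) (Hv : unital v) :
  (* Phi maps [Gr(E),(B,v)]_GEA into [E,Gamma(B,v)] *)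
  (forall g, gea_hom u v g -> ea_map_gamma v (Phi eta g)) /\
  (* Phi is injective *)
  (forall g h, gea_hom u v g -> gea_hom u v h ->
     (forall a, Phi eta g a = Phi eta h a) -> forall x, g x = h x) /\
  (* Phi is surjective *)
  (forall f, ea_map_gamma v f ->
     exists g, gea_hom u v g /\ forall a, Phi eta g a = f a) /\
  (* Phi preserves and reflects orthogonality *)
  (forall g h, gea_hom u v g -> gea_hom u v h ->
     (gea_orth u v g h <-> ea_map_orth v (Phi eta g) (Phi eta h))) /\
  (* Phi preserves orthosums and zero *)
  (forall g h, gea_hom u v g -> gea_hom u v h -> gea_orth u v g h ->
     gea_hom u v (map_add g h) /\
     forall a, Phi eta (map_add g h) a = map_add (Phi eta g) (Phi eta h) a) /\
  (gea_hom u v (@map_zero G B) /\ forall a, Phi eta (@map_zero G B) a = @map_zero E B a) /\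
  (* naturality in E : for an effect algebra morphism f : E -> F and the induced
     Gr(f) : Gr(E) -> Gr(F), Phi_E (g \o Gr(f)) = Phi_F g \o f *)
  (forall (F : effect_algebra) (H : pogroup) (uF : H) (etaF : F -> H),
     universal_group uF etaF ->
     forall f : E -> F, ea_hom f ->
     forall Grf : G -> H, po_hom Grf -> Grf u = uF ->
       (forall a, Grf (eta a) = etaF (f a)) ->
     forall g, gea_hom uF v g ->
       gea_hom u v (fun x => g (Grf x)) /\
       forall a, Phi eta (fun x => g (Grf x)) a = Phi etaF g (f a)) /\
  (* naturality in (B,v) : for a unital po-group morphism k : (B,v) -> (B',v'),
     Phi (k \o g) = Gamma(k) \o Phi g *)
  (forall (B' : pogroup) (v' : B') (k : B -> B'), unital v' ->
     po_hom k -> k v = v' ->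
     forall g, gea_hom u v g ->
       gea_hom u v' (fun x => k (g x)) /\
       forall a, Phi eta (fun x => k (g x)) a = k (Phi eta g a)).
Proof.
have hom_eta := Heta.2.1.
split; first exact: Phi_ea_map_gamma hom_eta.
split; first by move=> g h [hom_g _] [hom_h _]; exact: (Phi_inj Heta hom_g hom_h).
split; first exact: Phi_surj Heta.
split; first by move=> g h [hom_g _] [hom_h _]; exact: (Phi_orth hom_eta hom_g hom_h).
split; first by split; first exact: gea_hom_add.
split; first by split; first exact/gea_hom_zero/Hv.1.
split.
  move=> F H uF etaF _ f _ Grf hom_Grf Grf_u Grf_eta g gea_g.
  by split; [apply: gea_hom_precomp gea_g | move=> a; rewrite /Phi Grf_eta].
move=> B' v' k _ hom_k kv g gea_g.
by split; first exact: gea_hom_postcomp gea_g.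
Qed.
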